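(* $$\sum_{n\ge0}|\mathfrak S_n(1243,2143,231)|x^n=1+x\frac{(x-1)^2}{(2x-1)^2},$$ and consequently $|\mathfrak S_n(1243,2143,231)|=(n+2)2^{n-3}$ for all $n\ge2$.
   Context: $\mathfrak S_n(R)$ is the set of permutations of $\{1,\dots,n\}$ avoiding every pattern in $R$, where $\pi$ avoids $\sigma$ if no subsequence of $\pi$ has the same relative order as $\sigma$. *)

From HB Require Import structures.
From mathcomp Require Import all_boot all_order all_algebra all_fingroup.
From mathcomp Require Import all_classical all_reals all_analysis.
Set Implicit Arguments. Unset Strict Implicit. Unset Printing Implicit Defensive.

(* A permutation [pi] of {0,...,n-1} (i.e. of {1,...,n} shifted by one, which
   does not change relative orders) contains the pattern [sigma] (given as the
   sequence of its values, e.g. [:: 2; 3; 1] for 231) if there are positions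
   f 0 < f 1 < ... < f (k-1) such that pi (f a) < pi (f b) iff
   sigma_a < sigma_b. *)
Definition contains_pattern (n : nat) (pi : 'S_n) (sigma : seq nat) : bool :=
  [exists f : {ffun 'I_(size sigma) -> 'I_n},
    [forall a : 'I_(size sigma), forall b : 'I_(size sigma),
      ((a < b) ==> (f a < f b)) &&
      ((pi (f a) < pi (f b)) == (nth 0 sigma a < nth 0 sigma b))]].

Definition avoids (n : nat) (pi : 'S_n) (R : seq (seq nat)) : bool :=
  all (fun sigma => ~~ contains_pattern pi sigma) R.

Definition num_avoiders (R : seq (seq nat)) (n : nat) : nat :=
  #|[set pi : 'S_n | avoids pi R]|.

From HB Require Import structures.
From mathcomp Require Import all_boot all_order all_algebra all_fingroup.
From mathcomp Require Import all_classical all_reals all_analysis.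
From mathcomp Require Import zify ring lra.
Set Implicit Arguments. Unset Strict Implicit. Unset Printing Implicit Defensive.

(* Split a permutation s of {0, ..., n} at its maximum, s = a ++ n :: b.  Avoiding
   231 forces every entry of a to be smaller than every entry of b.  If s also
   avoids 132, one of a, b is empty, so the numbers b_n of {231, 132}-avoiders
   satisfy b_(n+1) = 2 b_n.  If s avoids {1243, 2143, 231} and neither a nor b is
   empty, two entries of a together with n and an entry of b would form 1243 or
   2143; hence a = [:: 0] and b is a shifted {231, 132}-avoider.  This gives
   a_(n+1) = 2 a_n + b_(n-1) for n >= 2, whence 2 a_(k+2) = (k + 4) 2^k.  The
   partial sums of the generating function then have a closed form, and
   n y^n -> 0 for |y| < 1 yields the limit. *)

(** * Patterns in sequences of naturals *)

Definition order_iso (t p : seq nat) : bool :=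
  (size t == size p) &&
  all (fun i => all (fun j => (nth 0 t i < nth 0 t j) == (nth 0 p i < nth 0 p j))
                    (iota 0 (size p))) (iota 0 (size p)).

Lemma order_isoP t p :
  reflect (size t = size p /\ forall i j, i < size p -> j < size p ->
             (nth 0 t i < nth 0 t j) = (nth 0 p i < nth 0 p j))
          (order_iso t p).
Proof.
apply: (iffP andP) => [[/eqP st /allP iso_tp]|[st iso_tp]]; split => //.
- move=> i j ip jp; have := iso_tp i; rewrite mem_iota ip => /(_ isT) /allP.
  by move=> /(_ j); rewrite mem_iota jp => /(_ isT) /eqP.
- exact/eqP.
- apply/allP => i; rewrite mem_iota => /andP[_ ip].
  by apply/allP => j; rewrite mem_iota => /andP[_ jp]; rewrite iso_tp.
Qed.

Lemma order_iso_size t p : order_iso t p -> size t = size p.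
Proof. by case/order_isoP. Qed.

Lemma order_iso_trans t p q : order_iso t p -> order_iso p q -> order_iso t q.
Proof.
move=> /order_isoP[stp tp] /order_isoP[spq pq]; apply/order_isoP.
split=> [|i j iq jq]; first by rewrite stp.
by rewrite tp ?spq // pq.
Qed.

Lemma order_iso_behead t p : order_iso t p -> order_iso (behead t) (behead p).
Proof.
case: t p => [|v t] [|y p] // /order_isoP[/= [st] tp]; apply/order_isoP.
by split=> // i j ip jp; apply: (tp i.+1 j.+1).
Qed.

Lemma order_iso_rev t p : order_iso (rev t) (rev p) = order_iso t p.
Proof.
apply/order_isoP/order_isoP; rewrite !size_rev => -[st tp]; split=> // i j ip jp.
- have := tp (size p - i.+1) (size p - j.+1).
  by rewrite !nth_rev ?st ?subnSK ?subKn ?leq_subr //; lia.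
- by rewrite !nth_rev ?st // tp; lia.
Qed.

Lemma order_iso_map f t p : {mono f : x y / x < y} ->
  order_iso (map f t) p = order_iso t p.
Proof.
move=> mono_f; apply/order_isoP/order_isoP; rewrite size_map => -[st tp];
  split=> // i j ip jp; rewrite -tp // !(nth_map 0) ?st // ?mono_f //.
Qed.

Definition contains (p s : seq nat) : bool :=
  [exists m : (size s).-tuple bool, order_iso (mask m s) p].

Lemma containsP p s : reflect (exists2 t, subseq t s & order_iso t p) (contains p s).
Proof.
apply: (iffP existsP) => [[m iso_mp]|[t /subseqP[m sm ->] iso_tp]].
  by exists (mask m s); first exact: mask_subseq.
have sm' : size m == size s by rewrite sm.
by exists (Tuple sm').
Qed.

Lemma contains_size p s : contains p s -> size p <= size s.
Proof. by case/containsP=> t /size_subseq + /order_iso_size <-. Qed.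

Lemma contains_subseq p s1 s2 : subseq s1 s2 -> contains p s1 -> contains p s2.
Proof.
move=> sub12 /containsP[t sub_t iso_t]; apply/containsP.
by exists t => //; apply: subseq_trans sub12.
Qed.

Lemma contains_order_iso p q s : order_iso p q -> contains p s -> contains q s.
Proof.
move=> iso_pq /containsP[t sub_t iso_t]; apply/containsP.
by exists t => //; apply: order_iso_trans iso_pq.
Qed.

Lemma contains_rev p s : contains (rev p) (rev s) = contains p s.
Proof.
apply/containsP/containsP => -[t sub_t iso_t].
  by exists (rev t); rewrite -1?subseq_rev -1?order_iso_rev revK.
by exists (rev t); rewrite 1?subseq_rev 1?order_iso_rev.
Qed.

Lemma contains_map f p s : {mono f : x y / x < y} ->
  contains p (map f s) = contains p s.
Proof.
move=> mono_f; apply/containsP/containsP => -[t sub_t iso_t].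
  have /subseqP[m sm def_t] := sub_t; rewrite -map_mask in def_t.
  by exists (mask m s); [exact: mask_subseq | rewrite -(order_iso_map _ _ mono_f) -def_t].
by exists (map f t); [exact: map_subseq | rewrite order_iso_map].
Qed.

Lemma subseq_consP (t s : seq nat) v :
  subseq t (v :: s) -> subseq t s \/ exists2 t', t = v :: t' & subseq t' s.
Proof.
case: t => [|w t] /=; first by left; rewrite sub0seq.
by case: eqP => [->|_]; [right; exists t | left].
Qed.

Lemma contains_consP p v s : contains p (v :: s) ->
  contains p s \/ exists2 t, subseq t s & order_iso (v :: t) p.
Proof.
case/containsP=> t /subseq_consP[sub_t|[t' -> sub_t']] iso_t.
  by left; apply/containsP; exists t.
by right; exists t'.
Qed.

Lemma contains_cons_behead p v s : contains p (v :: s) -> contains (behead p) s.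
Proof.
case/contains_consP=> [/containsP[t sub_t iso_t] | [t sub_t /order_iso_behead iso_t]];
  apply/containsP; last by exists t.
exists (behead t); last exact: order_iso_behead.
by apply: subseq_trans sub_t; rewrite -drop1 drop_subseq.
Qed.

Lemma contains_cons_max p m s :
  has (fun x => head 0 p < x) p -> all (fun x => x < m) s ->
  contains p (m :: s) = contains p s.
Proof.
move=> /hasP[x x_p lt_hx] /allP lt_sm; apply/idP/idP; last exact/contains_subseq/subseq_cons.
case/contains_consP=> // -[t sub_t /order_isoP[st iso_t]]; exfalso.
case: p st iso_t x_p lt_hx => [//|y p] /= [st] iso_t.
rewrite inE => /predU1P[-> | /(nthP 0)[j jp <-]] lt_jy; first by rewrite ltnn in lt_jy.
have tj_s : nth 0 t j \in s by apply: (mem_subseq sub_t); rewrite mem_nth ?st.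
by have := iso_t j.+1 0 jp isT; rewrite /= lt_sm // ltnNge (ltnW lt_jy).
Qed.

Lemma contains_cons_min p v s :
  has (fun x => x < head 0 p) p -> all (fun x => v < x) s ->
  contains p (v :: s) = contains p s.
Proof.
move=> /hasP[x x_p lt_xh] /allP lt_vs; apply/idP/idP; last exact/contains_subseq/subseq_cons.
case/contains_consP=> // -[t sub_t /order_isoP[st iso_t]]; exfalso.
case: p st iso_t x_p lt_xh => [//|y p] /= [st] iso_t.
rewrite inE => /predU1P[-> | /(nthP 0)[j jp <-]] lt_jy; first by rewrite ltnn in lt_jy.
have tj_s : nth 0 t j \in s by apply: (mem_subseq sub_t); rewrite mem_nth ?st.
by have := iso_t 0 j.+1 isT jp; rewrite /= lt_vs // ltnNge (ltnW lt_jy).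
Qed.

Lemma contains_rcons_max p m s :
  has (fun x => last 0 p < x) p -> all (fun x => x < m) s ->
  contains p (rcons s m) = contains p s.
Proof.
move=> lt_lp lt_sm; rewrite -contains_rev rev_rcons contains_cons_max ?contains_rev //.
  by rewrite has_rev; case/lastP: p lt_lp => // p y; rewrite rev_rcons last_rcons.
by rewrite all_rev.
Qed.

Definition avoids_seq (R : seq (seq nat)) (s : seq nat) : bool :=
  all (fun p => ~~ contains p s) R.

Lemma avoids_seq_subseq R s1 s2 : subseq s1 s2 -> avoids_seq R s2 -> avoids_seq R s1.
Proof. by move=> sub12; apply: sub_all => p; apply/contra/contains_subseq. Qed.

Lemma avoids_seq_short R s : all (fun p => size s < size p) R -> avoids_seq R s.
Proof.
by apply: sub_all => p; apply: contraTN => /contains_size; rewrite -leqNgt.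
Qed.

Lemma avoids_seq_cons_max R m s :
  all (fun p => has (fun x => head 0 p < x) p) R -> all (fun x => x < m) s ->
  avoids_seq R (m :: s) = avoids_seq R s.
Proof.
by move=> /allP hR lt_sm; apply: eq_in_all => p /hR hp; rewrite contains_cons_max.
Qed.

Lemma avoids_seq_rcons_max R m s :
  all (fun p => has (fun x => last 0 p < x) p) R -> all (fun x => x < m) s ->
  avoids_seq R (rcons s m) = avoids_seq R s.
Proof.
by move=> /allP hR lt_sm; apply: eq_in_all => p /hR hp; rewrite contains_rcons_max.
Qed.

Lemma avoids_seq_map f R s : {mono f : x y / x < y} ->
  avoids_seq R (map f s) = avoids_seq R s.
Proof. by move=> mono_f; apply: eq_all => p; rewrite contains_map. Qed.

Definition p132 := [:: 1; 3; 2].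
Definition p231 := [:: 2; 3; 1].
Definition p1243 := [:: 1; 2; 4; 3].
Definition p2143 := [:: 2; 1; 4; 3].

Definition pats231_132 := [:: p231; p132].
Definition pats1243_2143_231 := [:: p1243; p2143; p231].

Lemma order_iso132 a b c : order_iso [:: a; b; c] p132 = (a < c < b).
Proof.
by rewrite /order_iso /=; case: (ltngtP a b) => ?; case: (ltngtP a c) => ?;
  case: (ltngtP b c) => ? //=; lia.
Qed.

Lemma order_iso231 a b c : order_iso [:: a; b; c] p231 = (c < a < b).
Proof.
by rewrite /order_iso /=; case: (ltngtP a b) => ?; case: (ltngtP a c) => ?;
  case: (ltngtP b c) => ? //=; lia.
Qed.

Lemma order_iso1243 a b c d : order_iso [:: a; b; c; d] p1243 = [&& a < b, b < d & d < c].
Proof.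
by rewrite /order_iso /=; case: (ltngtP a b) => ?; case: (ltngtP a c) => ?;
  case: (ltngtP a d) => ?; case: (ltngtP b c) => ?; case: (ltngtP b d) => ?;
  case: (ltngtP c d) => ? //=; lia.
Qed.

Lemma order_iso2143 a b c d : order_iso [:: a; b; c; d] p2143 = [&& b < a, a < d & d < c].
Proof.
by rewrite /order_iso /=; case: (ltngtP a b) => ?; case: (ltngtP a c) => ?;
  case: (ltngtP a d) => ?; case: (ltngtP b c) => ?; case: (ltngtP b d) => ?;
  case: (ltngtP c d) => ? //=; lia.
Qed.

Lemma avoids1243_2143_231_inflate m b :
  all (fun x => x < m) b -> avoids_seq pats231_132 b ->
  avoids_seq pats1243_2143_231 (0 :: m.+1 :: map succn b).
Proof.
move=> lt_bm; rewrite /avoids_seq /= !andbT => /andP[no231 no132].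
have lt_sb : all (fun x => x < m.+1) (map succn b) by rewrite all_map.
have pos_sb : all (fun x => 0 < x) (m.+1 :: map succn b) by rewrite /= all_map; apply/allP.
apply/and3P; split; last by rewrite contains_cons_min // contains_cons_max // contains_map.
(* Deleting the first letter of 1243 or 2143 leaves a copy of 132. *)
all: apply: contra no132 => /contains_cons_behead.
all: by rewrite contains_cons_max // contains_map //; apply: contains_order_iso.
Qed.

(** * Avoiders among the permutations of [0, n) *)

Definition perms n := permutations (iota 0 n).

Definition avoiders R n := [seq s <- perms n | avoids_seq R s].

Lemma mem_avoiders R n s :
  (s \in avoiders R n) = avoids_seq R s && perm_eq s (iota 0 n).
Proof. by rewrite mem_filter mem_permutations. Qed.

Lemma avoiders_uniq R n : uniq (avoiders R n).
Proof. by rewrite filter_uniq ?permutations_uniq. Qed.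

Lemma size_avoiders_short R n :
  all (fun p => n < size p) R -> size (avoiders R n) = n`!.
Proof.
move=> short; rewrite size_filter -{2}(size_iota 0 n) -size_permutations ?iota_uniq //.
apply/eqP; rewrite -all_count; apply/allP => s; rewrite mem_permutations => /perm_size.
by rewrite size_iota => sn; apply: avoids_seq_short; rewrite sn.
Qed.

Lemma perm_iota_insert n a b :
  perm_eq (a ++ n :: b) (iota 0 n.+1) = perm_eq (a ++ b) (iota 0 n).
Proof.
rewrite -addn1 iotaD /= -cat1s perm_catCA /= perm_sym perm_catC /=.
by rewrite perm_cons perm_sym.
Qed.

Lemma perm_iota_rcons n s : perm_eq (rcons s n) (iota 0 n.+1) = perm_eq s (iota 0 n).
Proof. by rewrite -cats1 perm_iota_insert cats0. Qed.

Lemma perm_iota_cons n s : perm_eq (n :: s) (iota 0 n.+1) = perm_eq s (iota 0 n).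
Proof. exact: (perm_iota_insert n [::]). Qed.

Lemma perm_iota_shift n s :
  perm_eq (0 :: map succn s) (iota 0 n.+1) = perm_eq s (iota 0 n).
Proof.
rewrite /= -add1n iotaDl perm_cons; apply/idP/idP; last exact: perm_map.
by apply: perm_map_inj; apply: succn_inj.
Qed.

Lemma perm_iota_lt n s : perm_eq s (iota 0 n) -> all (fun x => x < n) s.
Proof. by move=> perm_s; apply/allP => x; rewrite (perm_mem perm_s) mem_iota. Qed.

Lemma perm_iota_max n s : perm_eq s (iota 0 n.+1) -> exists a b, s = a ++ n :: b.
Proof.
move=> perm_s; have : n \in s by rewrite (perm_mem perm_s) mem_iota /=.
by case/splitPr=> a b; exists a, b.
Qed.

Lemma subseq_pivot3 (x m z : nat) a b :
  x \in a -> z \in b -> subseq [:: x; m; z] (a ++ m :: b).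
Proof.
move=> xa zb; rewrite -[[:: x; m; z]]/([:: x] ++ [:: m; z]).
by apply: cat_subseq; rewrite ?sub1seq //= eqxx sub1seq.
Qed.

Lemma avoids231_pivot a m b x z :
  perm_eq (a ++ m :: b) (iota 0 m.+1) -> ~~ contains p231 (a ++ m :: b) ->
  x \in a -> z \in b -> x < z < m.
Proof.
move=> perm_s no231 xa zb.
have /allP lt_m : all (fun y => y < m) (a ++ b).
  by apply: perm_iota_lt; rewrite -perm_iota_insert.
rewrite lt_m ?mem_cat ?zb ?orbT // andbT ltn_neqAle; apply/andP; split.
  have : uniq (a ++ m :: b) by rewrite (perm_uniq perm_s) iota_uniq.
  apply: contraTneq => eq_xz; rewrite cat_uniq; apply/and3P => -[_ /hasP + _].
  by apply; exists z; rewrite ?inE ?zb ?orbT // -eq_xz.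
rewrite leqNgt; apply: contra no231 => lt_zx; apply/containsP.
by exists [:: x; m; z]; rewrite ?subseq_pivot3 // order_iso231 lt_zx lt_m ?mem_cat ?xa.
Qed.

Lemma avoiders_max_cases R n s : s \in avoiders R n.+1 ->
  [\/ exists2 a, s = rcons a n & a \in avoiders R n,
      exists2 b, s = n :: b & b \in avoiders R n |
      exists x a z b, [/\ s = (x :: a) ++ n :: z :: b,
                          perm_eq s (iota 0 n.+1) & avoids_seq R s]].
Proof.
rewrite mem_avoiders => /andP[av perm_s]; have [a [b def_s]] := perm_iota_max perm_s.
have perm_ab := perm_s; rewrite def_s perm_iota_insert in perm_ab.
case: b => [|z b] in def_s perm_ab.
  apply: Or31; exists a; first by rewrite def_s cats1.
  rewrite cats0 in perm_ab.
  by rewrite mem_avoiders perm_ab (avoids_seq_subseq _ av) // def_s prefix_subseq.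
case: a => [|x a] in def_s perm_ab.
  apply: Or32; exists (z :: b); rewrite // mem_avoiders perm_ab.
  by rewrite (avoids_seq_subseq _ av) // def_s subseq_cons.
by apply: Or33; exists x, a, z, b.
Qed.

Lemma avoiders231_132_split k s : s \in avoiders pats231_132 k.+2 ->
  (exists2 a, s = rcons a k.+1 & a \in avoiders pats231_132 k.+1) \/
  (exists2 b, s = k.+1 :: b & b \in avoiders pats231_132 k.+1).
Proof.
case/avoiders_max_cases=> [||[x [a [z [b [-> perm_s]]]]]]; [by left | by right|].
rewrite /avoids_seq /= andbT => /andP[no231 /negP[]].
have /andP[lt_xz lt_zm] := avoids231_pivot perm_s no231 (mem_head x a) (mem_head z b).
apply/containsP; exists [:: x; k.+1; z]; last by rewrite order_iso132 lt_xz.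
exact: (subseq_pivot3 _ (mem_head x a) (mem_head z b)).
Qed.

Lemma avoids1243_2143_231_deflate m b :
  all (fun x => 0 < x) b -> avoids_seq pats1243_2143_231 (0 :: m :: b) ->
  avoids_seq pats231_132 b.
Proof.
move=> /allP pos_b; rewrite /avoids_seq /= !andbT => /and3P[no1243 _ no231].
apply/andP; split; first by apply: contra no231; apply/contains_subseq/(suffix_subseq [:: 0; m]).
apply: contra no1243 => /containsP[t sub_t iso_t]; apply/containsP.
case: t sub_t iso_t (order_iso_size iso_t) => [|a1 [|b1 [|c1 []]]] // sub_t iso_t _.
exists [:: 0; a1; b1; c1].
  by rewrite /=; case: ifP => _ //; apply: cons_subseq sub_t.
rewrite (order_iso1243 0 a1 b1 c1) pos_b ?(mem_subseq sub_t) ?mem_head //.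
by rewrite order_iso132 in iso_t.
Qed.

Lemma not_avoids1243_2143_231 x y a m z b :
  perm_eq ([:: x, y & a] ++ m :: z :: b) (iota 0 m.+1) ->
  ~~ avoids_seq pats1243_2143_231 ([:: x, y & a] ++ m :: z :: b).
Proof.
move=> perm_s; apply/negP; rewrite /avoids_seq /= andbT => /and3P[no1243 no2143 no231].
have pivot := avoids231_pivot perm_s no231.
have /andP[lt_xz lt_zm] := pivot x z (mem_head _ _) (mem_head _ _).
have /andP[lt_yz _] : y < z < m by rewrite pivot ?mem_head // !inE eqxx orbT.
have sub_s : subseq [:: x; y; m; z] ([:: x, y & a] ++ m :: z :: b).
  by apply: (@cat_subseq _ [:: x; y]); rewrite /= ?eqxx ?sub0seq.
have : x != y by move: (perm_uniq perm_s); rewrite iota_uniq /= inE => /andP[/norP[]].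
case: ltngtP => // [lt_xy|lt_yx] _.
  by case/negP: no1243; apply/containsP; exists [:: x; y; m; z]; rewrite ?order_iso1243 ?lt_xy ?lt_yz.
by case/negP: no2143; apply/containsP; exists [:: x; y; m; z]; rewrite ?order_iso2143 ?lt_yx ?lt_xz.
Qed.

Lemma avoiders1243_2143_231_split k s : s \in avoiders pats1243_2143_231 k.+3 ->
  [\/ exists2 a, s = rcons a k.+2 & a \in avoiders pats1243_2143_231 k.+2,
      exists2 b, s = k.+2 :: b & b \in avoiders pats1243_2143_231 k.+2 |
      exists2 b, s = 0 :: k.+2 :: map succn b & b \in avoiders pats231_132 k.+1].
Proof.
case/avoiders_max_cases=> [||[x [a [z [b [-> perm_s av]]]]]]; [exact: Or31 | exact: Or32|].
case: a => [|y a] in perm_s av *; last by rewrite (negbTE (not_avoids1243_2143_231 perm_s)) in av.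
move: (av); rewrite /avoids_seq /= andbT => /and3P[_ _ no231].
have pivot := avoids231_pivot perm_s no231 (mem_head x [::]).
have x0 : x = 0.
  have : 0 \in [:: x] ++ k.+2 :: z :: b by rewrite (perm_mem perm_s) mem_iota.
  by rewrite mem_cat mem_seq1 in_cons /= => /orP[/eqP | /pivot]; rewrite ?ltn0.
subst x; apply: Or33.
have pos_b : all (fun v => 0 < v) (z :: b) by apply/allP => v /pivot /andP[].
have def_b : map succn (map predn (z :: b)) = z :: b.
  by rewrite -map_comp; apply: map_id_in => v /(allP pos_b) /prednK.
exists (map predn (z :: b)); first by rewrite def_b.
set b' := map predn (z :: b) in def_b *.
rewrite mem_avoiders -perm_iota_cons -perm_iota_shift map_cons def_b perm_s andbT.
by rewrite -(@avoids_seq_map succn) // def_b (avoids1243_2143_231_deflate pos_b av).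
Qed.

Lemma avoiders_rcons_max R n a :
  all (fun p => has (fun x => last 0 p < x) p) R ->
  a \in avoiders R n -> rcons a n \in avoiders R n.+1.
Proof.
move=> hR; rewrite !mem_avoiders perm_iota_rcons => /andP[av perm_a].
by rewrite perm_a avoids_seq_rcons_max ?(perm_iota_lt perm_a) ?av.
Qed.

Lemma avoiders_cons_max R n a :
  all (fun p => has (fun x => head 0 p < x) p) R ->
  a \in avoiders R n -> n :: a \in avoiders R n.+1.
Proof.
move=> hR; rewrite !mem_avoiders perm_iota_cons => /andP[av perm_a].
by rewrite perm_a avoids_seq_cons_max ?(perm_iota_lt perm_a) ?av.
Qed.

Lemma avoiders_max_index R n a :
  a \in avoiders R n -> index n (rcons a n) = n /\ index n (n :: a) = 0.
Proof.
rewrite mem_avoiders => /andP[_ perm_a]; split; last by rewrite /= eqxx.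
have n_a : n \notin a by rewrite (perm_mem perm_a) mem_iota ltnn.
by rewrite -cats1 index_cat (negbTE n_a) /= eqxx addn0 (perm_size perm_a) size_iota.
Qed.

Lemma avoiders231_132_rec k :
  perm_eq (avoiders pats231_132 k.+2)
    (map (rcons^~ k.+1) (avoiders pats231_132 k.+1) ++
     map (cons k.+1) (avoiders pats231_132 k.+1)).
Proof.
apply: uniq_perm (avoiders_uniq _ _) _ _ => [|s].
  rewrite cat_uniq !map_inj_uniq ?avoiders_uniq //=; first last.
  - exact: rcons_injl.
  - by move=> ? ? [].
  rewrite andbT; apply/hasPn => _ /mapP[b bA ->]; apply/mapP => -[a aA /(congr1 (index k.+1))].
  by have [-> _] := avoiders_max_index aA; have [_ ->] := avoiders_max_index bA.
rewrite mem_cat; apply/idP/orP => [/avoiders231_132_split[][a -> aA]|[]/mapP[a aA ->]].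
- by left; apply: map_f.
- by right; apply: map_f.
- exact: avoiders_rcons_max.
- exact: avoiders_cons_max.
Qed.

Lemma avoiders1243_2143_231_rec k :
  perm_eq (avoiders pats1243_2143_231 k.+3)
    (map (rcons^~ k.+2) (avoiders pats1243_2143_231 k.+2) ++
     map (cons k.+2) (avoiders pats1243_2143_231 k.+2) ++
     map (fun b => 0 :: k.+2 :: map succn b) (avoiders pats231_132 k.+1)).
Proof.
apply: uniq_perm (avoiders_uniq _ _) _ _ => [|s].
  rewrite !cat_uniq !map_inj_uniq ?avoiders_uniq //=; first last.
  - exact: rcons_injl.
  - by move=> ? ? [].
  - by move=> ? ? [] /(inj_map succn_inj).
  rewrite andbT has_cat negb_or -!andbA; apply/and3P; split.
  + apply/hasPn => _ /mapP[b bA ->]; apply/mapP => -[a aA /(congr1 (index k.+2))].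
    by have [-> _] := avoiders_max_index aA; have [_ ->] := avoiders_max_index bA.
  + apply/hasPn => _ /mapP[b bA ->]; apply/mapP => -[a aA /(congr1 (index k.+2))].
    by have [-> _] := avoiders_max_index aA; rewrite /= eqxx.
  + apply/hasPn => _ /mapP[b bA ->]; apply/mapP => -[a aA /(congr1 (index k.+2))].
    by rewrite /= eqxx.
rewrite !mem_cat; apply/idP/or3P => [|[]/mapP[a aA ->]].
- case/avoiders1243_2143_231_split=> -[a -> aA]; [apply: Or31 | apply: Or32 | apply: Or33];
    exact: map_f.
- exact: avoiders_rcons_max.
- exact: avoiders_cons_max.
- move: aA; rewrite !mem_avoiders => /andP[av perm_a].
  rewrite (avoids1243_2143_231_inflate (perm_iota_lt perm_a) av).
  by rewrite -[0 :: _]/(0 :: map succn (k.+1 :: a)) perm_iota_shift perm_iota_cons.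
Qed.

Lemma size_avoiders231_132 k : size (avoiders pats231_132 k.+1) = 2 ^ k.
Proof.
elim: k => [|k IH]; first by rewrite size_avoiders_short.
by rewrite (perm_size (avoiders231_132_rec k)) size_cat !size_map IH expnS mul2n addnn.
Qed.

Lemma size_avoiders1243_2143_231 k :
  (size (avoiders pats1243_2143_231 k.+2)).*2 = (k + 4) * 2 ^ k.
Proof.
elim: k => [|k IH]; first by rewrite size_avoiders_short.
rewrite (perm_size (avoiders1243_2143_231_rec k)) !size_cat !size_map.
by rewrite size_avoiders231_132 addnA addnn doubleD IH expnS; lia.
Qed.

(** * Permutations in ['S_n] as sequences *)

Definition seq_of_perm n (pi : 'S_n) : seq nat := [seq val (pi i) | i <- enum 'I_n].

Lemma size_seq_of_perm n (pi : 'S_n) : size (seq_of_perm pi) = n.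
Proof. by rewrite size_map size_enum_ord. Qed.

Lemma nth_seq_of_perm n (pi : 'S_n) (i : 'I_n) : nth 0 (seq_of_perm pi) i = val (pi i).
Proof. by rewrite (nth_map i) ?size_enum_ord // nth_ord_enum. Qed.

Lemma seq_of_perm_inj n : injective (@seq_of_perm n).
Proof. by move=> pi1 pi2 eq_pi; apply/permP => i; apply: val_inj; rewrite -!nth_seq_of_perm eq_pi. Qed.

Lemma perm_iota_seq_of_perm n (pi : 'S_n) : perm_eq (seq_of_perm pi) (iota 0 n).
Proof.
apply: uniq_perm; rewrite ?iota_uniq //.
  by rewrite map_inj_uniq ?enum_uniq // => i j /val_inj /perm_inj.
move=> x; rewrite mem_iota add0n; apply/mapP/idP => [[i _ ->]|lt_xn]; first exact: ltn_ord.
by exists (pi^-1 (Ordinal lt_xn))%g; rewrite ?mem_enum ?permKV.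
Qed.

Lemma sorted_enum_ord n : sorted (fun i j : 'I_n => i < j) (enum 'I_n).
Proof. by have := iota_ltn_sorted 0 n; rewrite -val_enum_ord sorted_map. Qed.

Lemma sorted_subseq_enum_ord n (J : seq 'I_n) :
  sorted (fun i j : 'I_n => i < j) J -> subseq J (enum 'I_n).
Proof.
have lt_trans : transitive (fun i j : 'I_n => i < j) by move=> ? ? ?; apply: ltn_trans.
move=> sorted_J; apply/subseq_uniqP; first exact: enum_uniq.
apply: (irr_sorted_eq lt_trans) => //; first by move=> i; rewrite /= ltnn.
  exact/sorted_filter/sorted_enum_ord.
by move=> i; rewrite mem_filter mem_enum andbT.
Qed.

Lemma contains_pattern_seq n (pi : 'S_n) sigma :
  contains_pattern pi sigma -> contains sigma (seq_of_perm pi).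
Proof.
set k := size sigma; case/existsP=> f /forallP fP.
have {}fP (a b : 'I_k) : ((a < b) ==> (f a < f b)) &&
    ((pi (f a) < pi (f b)) == (nth 0 sigma a < nth 0 sigma b)) by move/forallP: (fP a).
apply/containsP; exists [seq val (pi (f a)) | a <- enum 'I_k].
  rewrite (map_comp (fun i => val (pi i)) f); apply/map_subseq/sorted_subseq_enum_ord.
  apply: homo_sorted (sorted_enum_ord k) => a b lt_ab.
  by have /andP[/implyP/(_ lt_ab) ? _] := fP a b.
apply/order_isoP; rewrite size_map size_enum_ord; split=> // i j ik jk.
rewrite !(nth_map (Ordinal ik)) -?enumT ?size_enum_ord //.
rewrite -[i]/(nat_of_ord (Ordinal ik)) -[j]/(nat_of_ord (Ordinal jk)) !nth_ord_enum.
by have /andP[_ /eqP] := fP (Ordinal ik) (Ordinal jk).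
Qed.

Lemma seq_contains_pattern n (pi : 'S_n) sigma :
  contains sigma (seq_of_perm pi) -> contains_pattern pi sigma.
Proof.
set k := size sigma; case/containsP=> _ /subseqP[m sm ->] /order_isoP[].
set J := mask m (enum 'I_n); rewrite /seq_of_perm -map_mask size_map => szJ iso_t.
have le_kn : k <= n.
  by rewrite /k -szJ -[X in _ <= X](size_enum_ord n); apply/size_subseq/mask_subseq.
have sorted_J : sorted ltn (map val J).
  by rewrite map_mask val_enum_ord; apply/sorted_mask/iota_ltn_sorted/ltn_trans.
pose f a := nth (widen_ord le_kn a) J a.
have valf (a : 'I_k) : val (f a) = nth 0 (map val J) a.
  by rewrite (nth_map (widen_ord le_kn a)) ?szJ.
have valpif (a : 'I_k) : val (pi (f a)) = nth 0 [seq val (pi i) | i <- J] a.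
  by rewrite (nth_map (widen_ord le_kn a)) ?szJ.
apply/existsP; exists [ffun a => f a]; apply/forallP => a; apply/forallP => b.
rewrite !ffunE; apply/andP; split.
  apply/implyP => lt_ab; rewrite !valf; apply: (sorted_ltn_nth ltn_trans) => //.
  by rewrite inE size_map szJ.
  by rewrite inE size_map szJ.
by rewrite !valpif iso_t ?szJ.
Qed.

Lemma contains_patternE n (pi : 'S_n) sigma :
  contains_pattern pi sigma = contains sigma (seq_of_perm pi).
Proof. by apply/idP/idP; [apply: contains_pattern_seq | apply: seq_contains_pattern]. Qed.

Lemma seq_of_perm_onto n s : perm_eq s (iota 0 n) -> exists pi : 'S_n, seq_of_perm pi = s.
Proof.
move=> perm_s; have size_s : size s = n by rewrite (perm_size perm_s) size_iota.
have lt_s (i : 'I_n) : nth 0 s i < n.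
  by move/allP: (perm_iota_lt perm_s); apply; rewrite mem_nth ?size_s.
have f_inj : injective (fun i => Ordinal (lt_s i)).
  move=> i j [] /eqP; rewrite nth_uniq ?size_s ?(perm_uniq perm_s) ?iota_uniq //.
  by move/eqP/val_inj.
exists (perm f_inj); apply: (@eq_from_nth _ 0); rewrite size_seq_of_perm ?size_s // => i lt_in.
by rewrite -[i]/(nat_of_ord (Ordinal lt_in)) nth_seq_of_perm permE.
Qed.

Lemma avoidsE n (pi : 'S_n) R : avoids pi R = avoids_seq R (seq_of_perm pi).
Proof. by apply: eq_all => p; rewrite contains_patternE. Qed.

Lemma num_avoiders_seq R n : num_avoiders R n = size (avoiders R n).
Proof.
rewrite /num_avoiders cardE -(size_map (@seq_of_perm n)); apply/perm_size/uniq_perm.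
- by rewrite map_inj_uniq ?enum_uniq //; apply: seq_of_perm_inj.
- exact: avoiders_uniq.
move=> s; rewrite mem_avoiders; apply/mapP/andP => [[pi]|[av_s /seq_of_perm_onto[pi def_s]]].
  by rewrite mem_enum inE avoidsE => av_pi ->; rewrite av_pi perm_iota_seq_of_perm.
by exists pi; rewrite // mem_enum inE avoidsE def_s.
Qed.

(** * The generating function *)

Import Order.TTheory GRing.Theory Num.Theory.
Import numFieldNormedType.Exports.
Local Open Scope classical_set_scope.
Local Open Scope ring_scope.

Lemma bernoulli_ineq (R : realDomainType) (h : R) n :
  0 <= h -> 1 + n%:R * h <= (1 + h) ^+ n.
Proof.
move=> h_ge0; elim: n => [|n IH]; first by rewrite mul0r addr0 expr0.
have : 0 <= (1 + h) ^+ n by rewrite exprn_ge0 // addr_ge0.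
have : 0 <= n%:R * h * h by rewrite !mulr_ge0.
by rewrite exprS -natr1; nra.
Qed.

Lemma cvg_natr_mul_expr (R : realType) (y : R) :
  `|y| < 1 -> (fun n => n%:R * y ^+ n) @ \oo --> 0.
Proof.
move=> y_lt1; pose s := (1 + `|y|) / 2; pose h := s^-1 - 1; pose q := `|y| / s.
have s_gt0 : 0 < s by rewrite divr_gt0 // ltr_pwDl.
have y_lt_s : `|y| < s by rewrite ltr_pdivlMr //; lra.
have h_gt0 : 0 < h by rewrite subr_gt0 invf_gt1 // ltr_pdivrMr //; lra.
have q_ge0 : 0 <= q by rewrite divr_ge0 // ltW.
have q_lt1 : `|q| < 1 by rewrite ger0_norm // ltr_pdivrMr // mul1r.
have ns_le n : n%:R * s ^+ n <= h^-1.
  have := bernoulli_ineq n (ltW h_gt0); rewrite [1 + h]addrC subrK exprVn.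
  rewrite -(ler_pM2r (exprn_gt0 n s_gt0)) mulVf ?expf_neq0 ?gt_eqF // mulrDl mul1r.
  move=> le1; rewrite -(ler_pM2l h_gt0) mulfV ?gt_eqF //.
  by have := exprn_ge0 n (ltW s_gt0); nra.
apply/norm_cvg0P; apply: (@squeeze_cvgr _ _ _ _ (fun=> 0) (fun n => h^-1 * q ^+ n)).
- near=> n; rewrite normr_ge0 normrM normrX ger0_norm ?ler0n //=.
  have -> : `|y| = q * s by rewrite mulfVK // gt_eqF.
  by rewrite exprMn mulrCA [h^-1 * _]mulrC; apply: ler_wpM2l; rewrite ?exprn_ge0.
- exact: cvg_cst.
- by rewrite -[0](mulr0 h^-1); apply: cvgMl_tmp; apply: cvg_expr.
Unshelve. all: by end_near.
Qed.

Lemma num_avoiders1243_2143_231_small n : (n <= 2)%N ->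
  num_avoiders pats1243_2143_231 n = n`!.
Proof. by move=> le_n2; rewrite num_avoiders_seq size_avoiders_short //=; lia. Qed.

Lemma num_avoiders1243_2143_231_closed (R : numFieldType) k :
  8 * (num_avoiders pats1243_2143_231 k.+2)%:R = (k.+4)%:R * 2 ^+ k.+2 :> R.
Proof.
have := size_avoiders1243_2143_231 k; rewrite -num_avoiders_seq => e.
have {}e : (8 * num_avoiders pats1243_2143_231 k.+2 = k.+4 * 2 ^ k.+2)%N.
  by rewrite !expnS; lia.
by rewrite -natrM e natrM natrX.
Qed.

Lemma num_avoiders1243_2143_231E (R : numFieldType) n : (2 <= n)%N ->
  (num_avoiders pats1243_2143_231 n)%:R = (n + 2)%:R * (2 : R) ^ (n%:Z - 3).
Proof.
case: n => [|[|k]] // _; apply: (@mulfI _ 8); first by rewrite pnatr_eq0.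
have e8 : (8 : R) = 2 ^+ 3 by rewrite -natrX.
have e : (2 : R) ^ (k.+2%:Z - 3) * 2 ^+ 3 = 2 ^+ k.+2.
  by rewrite (exprnP _ 3) -expfzDr ?pnatr_eq0 // subrK.
by rewrite num_avoiders1243_2143_231_closed -e e8 addn2; ring.
Qed.

Lemma series_avoiders1243_2143_231 (R : numFieldType) (x : R) k :
  8 * (2 * x - 1) ^+ 2 *
    series (fun n => (num_avoiders pats1243_2143_231 n)%:R * x ^+ n) k.+2 =
  8 * (1 - 3 * x + 2 * x ^+ 2 + x ^+ 3) +
    (2 * x) ^+ k.+2 * ((k.+3)%:R * (2 * x) - (k.+4)%:R).
Proof.
set u := fun n => _; elim: k => [|k IH].
  rewrite seriesEord /= !big_ord_recr big_ord0 /u /= !num_avoiders1243_2143_231_small //.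
  by rewrite fact0 (factS 0) fact0; ring.
have e : (num_avoiders pats1243_2143_231 k.+2)%:R = (k.+4)%:R * 2 ^+ k.+2 / 8 :> R.
  by rewrite -num_avoiders1243_2143_231_closed [8 * _]mulrC mulfK ?pnatr_eq0.
by rewrite seriesSr mulrDr IH /u e [(2 * x) ^+ k.+3]exprS !exprMn; field.
Qed.

Lemma cvg_series_avoiders1243_2143_231 (R : realType) (x : R) : `|x| < 2^-1 ->
  series (fun n => (num_avoiders pats1243_2143_231 n)%:R * x ^+ n) @ \oo -->
    1 + x * ((x - 1) ^+ 2 / (2 * x - 1) ^+ 2).
Proof.
move=> x_lt; pose y := 2 * x.
have y_lt1 : `|y| < 1 by rewrite normrM ger0_norm // -ltr_pdivlMl // mulr1.
have y1_neq0 : y - 1 != 0.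
  by rewrite subr_eq0; apply: contraTneq y_lt1 => ->; rewrite normr1 ltxx.
have D_neq0 : 8 * (y - 1) ^+ 2 != 0 by rewrite mulf_neq0 ?pnatr_eq0 ?expf_neq0.
pose P := 1 - 3 * x + 2 * x ^+ 2 + x ^+ 3.
pose g N := (8 * P + N%:R * y ^+ N * (y - 1) + y ^+ N * (y - 2)) / (8 * (y - 1) ^+ 2).
have -> : 1 + x * ((x - 1) ^+ 2 / (2 * x - 1) ^+ 2) =
          (8 * P + 0 * (y - 1) + 0 * (y - 2)) / (8 * (y - 1) ^+ 2).
  by rewrite !mul0r !addr0 /P /y; field; exact: y1_neq0.
have g_cvg : g @ \oo --> (8 * P + 0 * (y - 1) + 0 * (y - 2)) / (8 * (y - 1) ^+ 2).
  apply: cvgMr_tmp; apply: cvgD; first apply: cvgD.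
  - exact: cvg_cst.
  - by apply: cvgMr_tmp; apply: cvg_natr_mul_expr.
  - by apply: cvgMr_tmp; apply: cvg_expr.
apply: cvg_trans g_cvg; apply: near_eq_cvg; exists 2%N => // -[|[|k]] // _.
apply: (mulfI D_neq0); rewrite series_avoiders1243_2143_231 /g mulrC divfK //.
by rewrite /y /P; ring.
Qed.

Theorem mainTheorem11 (R : realType) :
  (forall x : R, `|x| < 2^-1 ->
     series (fun k => (num_avoiders [:: [:: 1; 2; 4; 3]; [:: 2; 1; 4; 3]; [:: 2; 3; 1]]%N k)%:R
                      * x ^+ k) @ \oo -->
       1 + x * ((x - 1) ^+ 2 / (2 * x - 1) ^+ 2))
  /\
  (forall n : nat, (2 <= n)%N ->
     (num_avoiders [:: [:: 1; 2; 4; 3]; [:: 2; 1; 4; 3]; [:: 2; 3; 1]]%N n)%:R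
       = (n + 2)%:R * (2 : R) ^ (n%:Z - 3)).
Proof.
split; [exact: cvg_series_avoiders1243_2143_231 | exact: num_avoiders1243_2143_231E].
Qed.
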